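(* Let $(V,E)$ be an almost-acyclic $k$-uniform hypergraph, let $t$ be the number of its connected components with at least two vertices, and let $r=|E|$. Then every $B\in\mathcal B(E)$ satisfies $\|\Sigma B\|_{\mathsf H}\ge\max\{2t,\tfrac45r\}$.
   Context: $N\ge2$, $\mathbb Z_N=\mathbb Z/N\mathbb Z$. A $k$-uniform hypergraph $(V,E)$ has finite vertex set $V$ and a set $E$ of edges, each an ordered $k$-tuple of distinct vertices. It is almost-acyclic if for every $\ell\ge0$, any $\ell$ distinct edges together cover at least $\ell(k-1.1)$ vertices. For $y\in\mathbb Z_N^V$, $\|y\|_{\mathsf H}=|\mathrm{supp}(y)|$ is the number of nonzero coordinates. $\mathcal B(E)$ is the set of maps $B:E\to\mathbb Z_N^V$ such that for each $e=(v_1,\dots,v_k)\in E$, $\mathrm{supp}(B(e))\subseteq\{v_1,\dots,v_k\}$ and $|\mathrm{supp}(B(e))|\ge3$; $\Sigma B=\sum_{e\in E}B(e)\in\mathbb Z_N^V$. *)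

From HB Require Import structures.
From mathcomp Require Import all_boot all_order all_algebra.
Set Implicit Arguments. Unset Strict Implicit. Unset Printing Implicit Defensive.
Import Order.TTheory GRing.Theory Num.Theory.
Local Open Scope ring_scope.

Section HyperDefs.
Variables (V : finType) (k : nat).

Definition covered (F : {set k.-tuple V}) : {set V} :=
  [set v | [exists e in F, v \in (e : seq V)]].

Definition edges_ok (E : {set k.-tuple V}) : Prop :=
  forall e, e \in E -> uniq (e : seq V).

Definition almost_acyclic (E : {set k.-tuple V}) : Prop :=
  forall F : {set k.-tuple V}, F \subset E ->
    (#|F|%:R * (k%:R - 11%:R / 10%:R) <= (#|covered F|)%:R :> rat).

Definition hadj (E : {set k.-tuple V}) : rel V :=
  fun u v => [exists e in E, (u \in (e : seq V)) && (v \in (e : seq V))].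

Definition hcomponents (E : {set k.-tuple V}) : {set {set V}} :=
  [set [set v | connect (hadj E) u v] | u : V].

Definition n_big_components (E : {set k.-tuple V}) : nat :=
  #|[set C in hcomponents E | (1 < #|C|)%N]|.

Definition hamming (N : nat) (y : {ffun V -> 'Z_N}) : nat :=
  #|[set v | y v != 0]|.

Definition in_calB (N : nat) (E : {set k.-tuple V})
    (B : k.-tuple V -> {ffun V -> 'Z_N}) : Prop :=
  forall e, e \in E ->
    [set v | B e v != 0] \subset [set v | v \in (e : seq V)] /\
    (3 <= #|[set v | B e v != 0%R]|)%N.

Definition SigmaB (N : nat) (E : {set k.-tuple V})
    (B : k.-tuple V -> {ffun V -> 'Z_N}) : {ffun V -> 'Z_N} :=
  \sum_(e in E) B e.

End HyperDefs.

(* Call v private for a set of edges F if exactly one B e, e in F, is nonzero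
   at v; the private vertices of E lie in the support of Sigma B.  Each B e
   has at least three nonzero entries, all inside e, so double counting gives
   3|F| + 2|cover F| <= #private + 2k|F|; with almost-acyclicity
   |cover F| >= (k - 1.1)|F| this yields #private >= (4/5)|F|.  Applied to the
   edges meeting a nontrivial component it gives two private vertices in every
   such component, and components are disjoint. *)
From HB Require Import structures.
From mathcomp Require Import all_boot all_order all_algebra.
From mathcomp Require Import zify lra.
Import Order.TTheory GRing.Theory Num.Theory.
Set Implicit Arguments. Unset Strict Implicit. Unset Printing Implicit Defensive.
Local Open Scope ring_scope.

Lemma card_set_sum (T : finType) (P : pred T) :
  #|[set x | P x]| = (\sum_x P x)%N.
Proof. by rewrite -sum1_card big_mkcond; apply: eq_bigr => x _; rewrite inE. Qed.

Lemma card_set_in_sum (T : finType) (A : {pred T}) (P : pred T) :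
  #|[set x in A | P x]| = (\sum_(x in A) P x)%N.
Proof.
rewrite card_set_sum [RHS]big_mkcond /=.
by apply: eq_bigr => x _; case: (x \in A).
Qed.

Lemma sum_card_setI_le {T : finType} {P : {set {set T}}} (X : {set T}) :
  trivIset P -> (\sum_(C in P) #|X :&: C| <= #|X|)%N.
Proof.
move=> trivP.
have -> : (\sum_(C in P) #|X :&: C| = \sum_(x in cover P) (x \in X))%N.
  rewrite (big_trivIset _ trivP); apply: eq_bigr => C _.
  by rewrite -card_set_in_sum; apply: eq_card => x; rewrite !inE andbC.
rewrite -card_set_in_sum subset_leq_card //.
by apply/subsetP => x; rewrite inE => /andP[].
Qed.

Section PrivateVertices.
Variables (N : nat) (V : finType) (k : nat).
Variables (E : {set k.-tuple V}) (B : k.-tuple V -> {ffun V -> 'Z_N}).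
Hypothesis edgesE : edges_ok E.
Hypothesis BE : in_calB E B.

Definition supp_degree (F : {set k.-tuple V}) (v : V) : nat :=
  #|[set e in F | B e v != 0]|.

Definition incidence (F : {set k.-tuple V}) (v : V) : nat :=
  #|[set e in F | v \in (e : seq V)]|.

Definition private_vertices (F : {set k.-tuple V}) : {set V} :=
  [set v | supp_degree F v == 1%N].

Lemma mem_supp (e : k.-tuple V) (v : V) :
  e \in E -> B e v != 0 -> v \in (e : seq V).
Proof.
move=> eE Bev; have [suppB _] := BE eE.
by have := subsetP suppB v; rewrite !inE; apply.
Qed.

Lemma sum_supp_degree (F : {set k.-tuple V}) :
  (\sum_v supp_degree F v = \sum_(e in F) #|[set v | B e v != 0%R]|)%N.
Proof.
under eq_bigr do rewrite /supp_degree card_set_in_sum.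
by rewrite exchange_big; apply: eq_bigr => e _; rewrite card_set_sum.
Qed.

Lemma sum_incidence (F : {set k.-tuple V}) :
  F \subset E -> (\sum_v incidence F v = k * #|F|)%N.
Proof.
move=> sFE; under eq_bigr do rewrite /incidence card_set_in_sum.
rewrite exchange_big mulnC -sum_nat_const; apply: eq_bigr => e eF.
rewrite -card_set_sum cardsE.
by rewrite (card_uniqP _) ?size_tuple //; apply/edgesE/(subsetP sFE).
Qed.

Lemma supp_degree_le_incidence (F : {set k.-tuple V}) (v : V) :
  F \subset E -> (supp_degree F v <= incidence F v)%N.
Proof.
move=> sFE; apply/subset_leq_card/subsetP => e; rewrite !inE => /andP[eF Bev].
by rewrite eF mem_supp // (subsetP sFE).
Qed.

Lemma covered_incidence (F : {set k.-tuple V}) (v : V) :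
  (v \in covered F) = (0 < incidence F v)%N.
Proof.
rewrite inE card_gt0; apply/existsP/set0Pn => [[e /andP[eF ve]]|[e]].
  by exists e; rewrite inE eF.
by rewrite inE => /andP[eF ve]; exists e; rewrite eF.
Qed.

Lemma private_count (F : {set k.-tuple V}) : F \subset E ->
  (3 * #|F| + 2 * #|covered F| <= #|private_vertices F| + 2 * k * #|F|)%N.
Proof.
move=> sFE.
have pointwise v : (supp_degree F v + 2 * (v \in covered F)
                    <= (supp_degree F v == 1%N) + 2 * incidence F v)%N.
  have := supp_degree_le_incidence v sFE; rewrite covered_incidence.
  by case: eqP; case: ltnP; lia.
have three_le : (3 * #|F| <= \sum_v supp_degree F v)%N.
  rewrite sum_supp_degree mulnC -sum_nat_const; apply: leq_sum => e eF.
  by have [_] := BE (subsetP sFE e eF).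
have : (\sum_v (supp_degree F v + 2 * (v \in covered F))
         <= \sum_v ((supp_degree F v == 1%N) + 2 * incidence F v))%N.
  by apply: leq_sum => v _; apply: pointwise.
rewrite big_split /= -big_distrr /= big_split /= -big_distrr /=.
rewrite sum_incidence // -!card_set_sum.
rewrite (_ : [set v | v \in covered F] = covered F); last first.
  by apply/setP => v; rewrite inE.
by rewrite mulnA; apply: leq_trans; rewrite leq_add2r.
Qed.

Lemma private_ge_four_fifths (F : {set k.-tuple V}) :
  almost_acyclic E -> F \subset E ->
  (4%:R / 5%:R) * #|F|%:R <= #|private_vertices F|%:R :> rat.
Proof.
move=> acyclicE sFE.
have := private_count sFE; rewrite -(ler_nat rat) !natrD !natrM.
have := acyclicE F sFE; lra.
Qed.

Lemma private_sub_support :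
  private_vertices E \subset [set v | SigmaB E B v != 0].
Proof.
apply/subsetP => v; rewrite !inE => /cards1P[e0 supp_v].
have : e0 \in [set e in E | B e v != 0] by rewrite supp_v set11.
rewrite inE => /andP[e0E Be0v].
rewrite /SigmaB sum_ffunE (bigD1 e0) //= big1 ?addr0 // => e /andP[eE ne0].
apply/eqP; apply: contraNT ne0 => Bev.
have : e \in [set e in E | B e v != 0] by rewrite inE eE.
by rewrite supp_v inE.
Qed.

Lemma two_le_private (F : {set k.-tuple V}) :
  almost_acyclic E -> F \subset E -> (0 < #|F|)%N ->
  (2 <= #|private_vertices F|)%N.
Proof.
move=> acyclicE sFE F_gt0.
case: (eqVneq #|F| 1%N) => [/eqP/cards1P[e defF] | F_neq1].
  have eE : e \in E by rewrite (subsetP sFE) // defF set11.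
  have [_ supp3] := BE eE.
  apply: leq_trans (ltnW supp3) _; apply/subset_leq_card/subsetP => v.
  rewrite !inE /supp_degree defF => Bev; apply/cards1P; exists e.
  by apply/setP => x; rewrite !inE; case: eqP => [->|].
have F_ge2 : (2 <= #|F|)%N by rewrite ltn_neqAle eq_sym F_neq1.
have := private_ge_four_fifths acyclicE sFE.
rewrite -(ler_nat rat) in F_ge2; rewrite -(ltr_nat rat); lra.
Qed.

Definition edges_meeting (C : {set V}) : {set k.-tuple V} :=
  [set e in E | [exists v in C, v \in (e : seq V)]].

Section Component.
Variable u : V.
Let C := [set v | connect (hadj E) u v].

Lemma private_edges_meeting_component :
  private_vertices (edges_meeting C) = private_vertices E :&: C.
Proof.
apply/setP => v; rewrite in_setI; case vC: (v \in C).
  rewrite andbT !inE /supp_degree.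
  suff -> : [set e in edges_meeting C | B e v != 0]
            = [set e in E | B e v != 0] by [].
  apply/setP => e; rewrite !inE.
  apply/andP/andP => [[/andP[eE _] Bev] | [eE Bev]] //; split=> //.
  by rewrite eE; apply/existsP; exists v; rewrite vC mem_supp.
rewrite andbF inE /supp_degree (_ : [set _ in _ | _] = set0) ?cards0 //.
apply/setP => e; rewrite !inE; apply/negP => /andP[/andP[eE /existsP[w]]].
rewrite inE => /andP[uw we] Bev; move: vC; rewrite inE (connect_trans uw) //.
by rewrite connect1 //; apply/existsP; exists e; rewrite eE we mem_supp.
Qed.

Lemma edges_meeting_component_gt0 :
  (1 < #|C|)%N -> (0 < #|edges_meeting C|)%N.
Proof.
rewrite (cardsD1 u) inE connect0 ltnS card_gt0 => /set0Pn[v].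
rewrite !inE => /andP[neq_vu /connectP[[|x p] /= path_x last_v]].
  by rewrite last_v eqxx in neq_vu.
case/andP: path_x => /existsP[e /and3P[eE ue _]] _.
by apply/card_gt0P; exists e; rewrite inE eE; apply/existsP; exists u;
  rewrite inE connect0.
Qed.

End Component.

Lemma trivIset_hcomponents : trivIset (hcomponents E).
Proof.
have sym_connect : connect_sym (hadj E).
  apply: sym_connect_sym => x y.
  by apply/existsP/existsP; case=> e /and3P[eE xe ye]; exists e; rewrite eE xe ye.
apply/trivIsetP => C1 C2 /imsetP[u _ ->] /imsetP[u' _ ->]; apply: contraR.
case/pred0Pn => w /andP[]; rewrite !inE => uw u'w; apply/eqP/setP => x.
by rewrite !inE (same_connect sym_connect uw) (same_connect sym_connect u'w).
Qed.

Lemma big_components_private : almost_acyclic E ->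
  (2 * n_big_components E <= #|private_vertices E|)%N.
Proof.
move=> acyclicE; set P := [set C in hcomponents E | (1 < #|C|)%N].
have trivP : trivIset P.
  apply: trivIsetS trivIset_hcomponents.
  by apply/subsetP => C; rewrite inE => /andP[].
rewrite /n_big_components -/P mulnC -sum_nat_const.
apply: (leq_trans _ (sum_card_setI_le (private_vertices E) trivP)).
apply: leq_sum => C.
rewrite inE => /andP[/imsetP[u _ ->] C_gt1].
rewrite -private_edges_meeting_component; apply: two_le_private => //.
  by apply/subsetP => e; rewrite inE => /andP[].
exact: edges_meeting_component_gt0.
Qed.

End PrivateVertices.

Theorem lemma7p10 (N : nat) (hN : (1 < N)%N) (V : finType) (k : nat)
    (E : {set k.-tuple V}) (B : k.-tuple V -> {ffun V -> 'Z_N}) :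
  edges_ok E -> almost_acyclic E -> in_calB E B ->
  ((2 * n_big_components E)%:R <= (hamming (SigmaB E B))%:R :> rat) /\
  ((4%:R / 5%:R) * (#|E|)%:R <= (hamming (SigmaB E B))%:R :> rat).
Proof.
move=> edgesE acyclicE BE.
have private_le_hamming : (#|private_vertices B E| <= hamming (SigmaB E B))%N.
  exact/subset_leq_card/private_sub_support.
split.
  by rewrite ler_nat (leq_trans (big_components_private edgesE BE acyclicE)).
apply: le_trans (private_ge_four_fifths edgesE BE acyclicE (subxx E)) _.
by rewrite ler_nat.
Qed.
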